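(* Let $m\geq1$ and let $\{\Lambda_i\}_{i\geq1}$ be an infinite family of proper lattices in $\mathbb{Z}^m$ that are pairwise coprime. Then there is an infinite set $\{i_k\}_{k\geq1}$ of indices such that the integers $[\mathbb{Z}^m:\Lambda_{i_k}]$, $k\geq1$, are pairwise coprime.
   Context: A lattice in $\mathbb{Z}^m$ is a subgroup of finite index; it is proper if it is not $\mathbb{Z}^m$. Proper lattices $\Lambda,\Lambda'$ are coprime if $\Lambda+\Lambda'=\mathbb{Z}^m$. *)

From HB Require Import structures.
From mathcomp Require Import all_boot all_order all_algebra.
Set Implicit Arguments. Unset Strict Implicit. Unset Printing Implicit Defensive.
Import GRing.Theory Num.Theory.
Local Open Scope ring_scope.

Definition subgroupZ (m : nat) (L : 'rV[int]_m -> Prop) : Prop :=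
  L 0 /\ (forall x y, L x -> L y -> L (x - y)).

(* [Z^m : L] = n : there are exactly n cosets of L in Z^m, i.e. a complete
   irredundant system of n coset representatives. *)
Definition has_index (m : nat) (L : 'rV[int]_m -> Prop) (n : nat) : Prop :=
  exists f : 'I_n -> 'rV[int]_m,
    (forall x, exists i, L (x - f i)) /\
    (forall i j, L (f i - f j) -> i = j).

Definition lattice (m : nat) (L : 'rV[int]_m -> Prop) : Prop :=
  subgroupZ L /\ exists n : nat, has_index L n.

Definition proper_lattice (m : nat) (L : 'rV[int]_m -> Prop) : Prop :=
  lattice L /\ exists x, ~ L x.

Definition coprime_lattices (m : nat) (L L' : 'rV[int]_m -> Prop) : Prop :=
  forall x, exists a b, L a /\ L' b /\ x = a + b.

From mathcomp Require Import all_boot all_order all_algebra all_fingroup.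
From mathcomp Require Import boolp.
Set Implicit Arguments. Unset Strict Implicit. Unset Printing Implicit Defensive.
Import GRing.Theory Num.Theory.
Local Open Scope ring_scope.

(* Fix a prime p and reduce modulo p. If [Z^m : L_i] is divisible by p, then L_i + pZ^m is
   proper: otherwise multiplication by p permutes the cosets of L_i, some p^e - 1 kills
   Z^m / L_i, and the index divides (p^e - 1)^m. But if L_i and L_j (i <> j) had the same
   image in (Z/p)^m, coprimality would give L_i + pZ^m = Z^m. So only finitely many indices
   are divisible by p, one for each of the finitely many subsets of (Z/p)^m, and a greedy
   choice yields a subsequence with pairwise coprime indices. *)

Section ResidueRow.
Variables m k : nat.

Definition res_row (x : 'rV[int]_m) : {ffun 'I_m -> 'I_k.+1} :=
  [ffun j => inord `|(x ord0 j %% k.+1%:Z)%Z|%N].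
Definition lift_res (v : {ffun 'I_m -> 'I_k.+1}) : 'rV[int]_m :=
  \row_j (v j : nat)%:Z.
Definition quo_row (x : 'rV[int]_m) : 'rV[int]_m :=
  \row_j (x ord0 j %/ k.+1%:Z)%Z.

Lemma res_row_divz_eq x : x = lift_res (res_row x) + k.+1%:Z *: quo_row x.
Proof.
apply/rowP => j; rewrite !mxE ffunE.
have mod_ge0 : (0 <= x ord0 j %% k.+1%:Z)%Z by rewrite modz_ge0.
have mod_lt : (x ord0 j %% k.+1%:Z < k.+1%:Z)%Z by rewrite ltz_pmod.
rewrite inordK; last by rewrite -ltz_nat gez0_abs.
by rewrite gez0_abs // addrC mulrC -divz_eq.
Qed.

Lemma lift_resK : cancel lift_res res_row.
Proof.
move=> v; apply/ffunP => j; rewrite ffunE mxE modz_small; last first.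
  by rewrite lez_nat ltz_nat ltn_ord.
by apply/val_inj; rewrite /= inordK.
Qed.

Lemma res_rowDZ x y : res_row (x + k.+1%:Z *: y) = res_row x.
Proof. by apply/ffunP => j; rewrite !ffunE !mxE addrC mulrC modzMDl. Qed.

Lemma eq_res_row_sub x y :
  res_row x = res_row y -> x - y = k.+1%:Z *: (quo_row x - quo_row y).
Proof.
move=> e; rewrite {1}(res_row_divz_eq x) {1}(res_row_divz_eq y) e.
by rewrite scalerBr opprD addrACA subrr add0r.
Qed.

End ResidueRow.

Section Subgroup.
Variables (m : nat) (L : 'rV[int]_m -> Prop).
Hypothesis L_sub : subgroupZ L.

Lemma subgroupZ0 : L 0. Proof. by case: L_sub. Qed.

Lemma subgroupZB x y : L x -> L y -> L (x - y).
Proof. by case: L_sub => _; apply. Qed.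

Lemma subgroupZN x : L x -> L (- x).
Proof. by move=> Lx; rewrite -sub0r; apply: subgroupZB => //; apply: subgroupZ0. Qed.

Lemma subgroupZD x y : L x -> L y -> L (x + y).
Proof. by move=> Lx Ly; rewrite -[y]opprK; apply: subgroupZB => //; apply: subgroupZN. Qed.

Lemma subgroupZZ (z : int) x : L x -> L (z *: x).
Proof.
move=> Lx; have Ln (n : nat) : L (n%:Z *: x).
  elim: n => [|n IH]; first by rewrite scale0r; apply: subgroupZ0.
  by rewrite -[n.+1]addn1 PoszD scalerDl scale1r; apply: subgroupZD.
by case: z => n; rewrite ?NegzE ?scaleNr; [|apply: subgroupZN].
Qed.

End Subgroup.

Section CosetCounting.
Variables (m n : nat) (L : 'rV[int]_m -> Prop) (f : 'I_n -> 'rV[int]_m).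
Hypotheses (L_sub : subgroupZ L) (f_cover : forall x, exists i, L (x - f i))
  (f_uniq : forall i j, L (f i - f j) -> i = j).

Lemma has_index_gt0 : (0 < n)%N.
Proof. by have [i _] := f_cover 0; apply: leq_ltn_trans (ltn_ord i). Qed.

Lemma coset_rep_uniq x i j : L (x - f i) -> L (x - f j) -> i = j.
Proof.
move=> Li Lj; apply: f_uniq.
have -> : f i - f j = (x - f j) - (x - f i) by rewrite opprB [in RHS]addrC addrA subrK.
exact: subgroupZB.
Qed.

Variable k : nat.
Hypothesis L_scale : forall y, L (k.+1%:Z *: y).

Lemma sub_lift_res_row x : L (lift_res (res_row k x) - x).
Proof.
rewrite {2}(res_row_divz_eq k x) opprD addrA subrr add0r.
exact: subgroupZN.
Qed.

(* Every coset contains a residue vector, since k.+1 Z^m lies in L; translation by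
   f j - f i, reduced mod k.+1, matches the residues of the cosets of f i and f j, so all
   n cosets hold the same number of the (k.+1)^m residues. *)
Let coset_of (v : {ffun 'I_m -> 'I_k.+1}) : 'I_n := projT1 (cid (f_cover (lift_res v))).
Let coset_ofP v : L (lift_res v - f (coset_of v)).
Proof. exact: projT2 (cid (f_cover (lift_res v))). Qed.

Let shift (i j : 'I_n) (v : {ffun 'I_m -> 'I_k.+1}) := res_row k (lift_res v + (f j - f i)).

Let shiftK i j : cancel (shift i j) (shift j i).
Proof.
move=> v; rewrite /shift; set y := lift_res v + (f j - f i).
have -> : lift_res (res_row k y) = y + k.+1%:Z *: - quo_row k y.
  by rewrite scalerN {2}(res_row_divz_eq k y) addrK.
by rewrite addrAC res_rowDZ -addrA -[f i - f j]opprB subrr addr0 lift_resK.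
Qed.

Let coset_of_shift i j v : coset_of v = i -> coset_of (shift i j v) = j.
Proof.
move=> <-; apply: (coset_rep_uniq (coset_ofP _)).
set y := lift_res v + (f j - f (coset_of v)).
have -> : lift_res (shift (coset_of v) j v) - f j =
    (lift_res (res_row k y) - y) + (y - f j) by rewrite addrA subrK.
have -> : y - f j = lift_res v - f (coset_of v).
  by rewrite /y addrCA [_ - f j]addrC addKr.
by apply: (subgroupZD L_sub); [apply: sub_lift_res_row | apply: coset_ofP].
Qed.

Let card_coset_le i j : (#|[set v | coset_of v == i]| <= #|[set v | coset_of v == j]|)%N.
Proof.
rewrite -(card_imset _ (can_inj (shiftK i j))).
apply: subset_leq_card; apply/subsetP => w /imsetP [v].
by rewrite !inE => /eqP vi ->; rewrite (coset_of_shift j vi).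
Qed.

Lemma index_dvd_expn : (n %| k.+1 ^ m)%N.
Proof.
have [i0 _] := f_cover 0.
have card_fibers : #|{ffun 'I_m -> 'I_k.+1}| =
    (\sum_(i < n) #|[set v | coset_of v == i]|)%N.
  rewrite -sum1_card (partition_big coset_of xpredT) //=.
  by apply: eq_bigr => i _; rewrite -sum1_card; apply: eq_bigl => v; rewrite inE.
rewrite (eq_bigr (fun _ => #|[set v | coset_of v == i0]|)) in card_fibers; last first.
  by move=> i _; apply/eqP; rewrite eqn_leq !card_coset_le.
rewrite sum_nat_const card_ord card_ffun !card_ord in card_fibers.
by rewrite card_fibers dvdn_mulr.
Qed.

End CosetCounting.

Section IndexCoprime.
Variables (m n p : nat) (L : 'rV[int]_m -> Prop) (f : 'I_n -> 'rV[int]_m).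
Hypotheses (L_sub : subgroupZ L) (f_cover : forall x, exists i, L (x - f i))
  (f_uniq : forall i j, L (f i - f j) -> i = j).
Hypotheses (p_gt1 : (1 < p)%N)
  (L_scale_cover : forall x, exists a y, L a /\ x = a + p%:Z *: y).

Let mul_p_cover i : exists j, L (f i - p%:Z *: f j).
Proof.
have [a [y [La ->]]] := L_scale_cover (f i); have [j Lyj] := f_cover y.
exists j; rewrite -addrA -scalerBr.
by apply: subgroupZD => //; apply: subgroupZZ.
Qed.

(* [div_p] inverts multiplication by p on cosets; as a permutation of a finite set it has
   finite order e, so p ^ e - 1 annihilates Z^m / L. *)
Let div_p := projT1 (choice mul_p_cover).
Let div_pP i : L (f i - p%:Z *: f (div_p i)) := projT2 (choice mul_p_cover) i.

Let div_p_inj : injective div_p.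
Proof.
move=> i j eq_ij; apply: f_uniq.
have -> : f i - f j = (f i - p%:Z *: f (div_p i)) - (f j - p%:Z *: f (div_p j)).
  by rewrite eq_ij opprB addrA subrK.
exact: subgroupZB (div_pP i) (div_pP j).
Qed.

Let sub_scale_expn e i : L (f i - p%:Z ^+ e *: f ((perm div_p_inj ^+ e)%g i)).
Proof.
elim: e i => [|e IH] i; first by rewrite expg0 perm1 expr0 scale1r subrr; apply: subgroupZ0.
rewrite expgSr permM permE; set j := (perm div_p_inj ^+ e)%g i.
have -> : f i - p%:Z ^+ e.+1 *: f (div_p j) =
    (f i - p%:Z ^+ e *: f j) + p%:Z ^+ e *: (f j - p%:Z *: f (div_p j)).
  by rewrite scalerBr scalerA -exprSr addrA subrK.
by apply: (subgroupZD L_sub); [apply: IH | apply: (subgroupZZ L_sub); apply: div_pP].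
Qed.

Lemma exists_coprime_annihilator : exists N, coprime p N.+1 /\ forall y, L (N.+1%:Z *: y).
Proof.
set e := #[perm div_p_inj]%g.
have e_gt0 : (0 < e)%N := order_gt0 _.
have pe_gt1 : (1 < p ^ e)%N by rewrite -{1}(expn0 p) ltn_exp2l.
exists (p ^ e)%N.-2.
have -> : ((p ^ e).-2.+1 = (p ^ e).-1)%N by case: (p ^ e)%N pe_gt1 => [|[]].
split.
  rewrite coprime_sym; apply: (coprime_dvdr (dvdn_exp e_gt0 (dvdnn p))).
  exact: coprimePn (ltnW pe_gt1).
have L_coset i : L ((p ^ e)%N.-1%:Z *: f i).
  have := sub_scale_expn e i; rewrite expg_order perm1 => Li.
  rewrite (predn_int (ltnW pe_gt1)) -natz natrX natz scalerBl scale1r -opprB.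
  exact: subgroupZN.
move=> y; have [i Lyi] := f_cover y.
by rewrite -(subrK (f i) y) scalerDr; apply: (subgroupZD L_sub); [apply: subgroupZZ|].
Qed.

Lemma index_coprime : coprime p n.
Proof.
have [N [copN L_scale]] := exists_coprime_annihilator.
exact: coprime_dvdr (index_dvd_expn L_sub f_cover f_uniq L_scale) (coprimeXr _ copN).
Qed.

End IndexCoprime.

Definition res_image m k (L : 'rV[int]_m -> Prop) : {set {ffun 'I_m -> 'I_k.+1}} :=
  [set v | `[< exists a, L a /\ res_row k a = v >]].

Lemma res_image_eq_cover m k (L L' : 'rV[int]_m -> Prop) :
  subgroupZ L -> coprime_lattices L L' -> res_image k L = res_image k L' ->
  forall x, exists a y, L a /\ x = a + k.+1%:Z *: y.
Proof.
move=> L_sub LL'_cop eq_im x; have [a [b [La [L'b ->]]]] := LL'_cop x.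
have : res_row k b \in res_image k L' by rewrite inE; apply/asboolP; exists b.
rewrite -eq_im inE => /asboolP [c [Lc eq_res]].
exists (a + c), (quo_row k b - quo_row k c); split; first exact: subgroupZD.
by rewrite -eq_res_row_sub // addrACA subrr addr0.
Qed.

Lemma bounded_of_inj_finType (T : finType) (P : pred nat) (g : nat -> T) :
  {in P &, injective g} -> exists B, forall i, P i -> (i < B)%N.
Proof.
move=> g_inj.
have preimage t : exists i, (exists2 j, P j & g j = t) -> P i /\ g i = t.
  have [[i Pi git]|no_preimage] := pselect (exists2 j, P j & g j = t); first by exists i.
  by exists 0%N => /no_preimage.
have [h hP] := choice preimage.
exists (\max_t h t).+1 => i Pi; have [Phi ghi] := hP (g i) (ex_intro2 _ _ i Pi erefl).
by rewrite ltnS (g_inj _ _ Pi Phi (esym ghi)) leq_bigmax.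
Qed.

Lemma bounded_index_dvd m (L : nat -> 'rV[int]_m -> Prop) (idx : nat -> nat) p :
  (forall i, subgroupZ (L i)) -> (forall i j, i <> j -> coprime_lattices (L i) (L j)) ->
  (forall i, has_index (L i) (idx i)) -> prime p ->
  exists B, forall i, (p %| idx i)%N -> (i < B)%N.
Proof.
move=> L_sub L_cop L_idx p_pr; have p_gt1 := prime_gt1 p_pr.
case: p p_gt1 p_pr => // k p_gt1 p_pr.
apply: (@bounded_of_inj_finType _ _ (fun i => res_image k (L i))) => i j.
rewrite !unfold_in /= => p_dvd _ eq_im.
have [//|neq_ij] := pselect (i = j); have [f [f_cover f_uniq]] := L_idx i.
have cover := res_image_eq_cover (L_sub i) (L_cop _ _ neq_ij) eq_im.
have := index_coprime (L_sub i) f_cover f_uniq p_gt1 cover.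
by rewrite prime_coprime // p_dvd.
Qed.

Section CoprimeSubsequence.
Variable a : nat -> nat.
Hypotheses (a_gt0 : forall i, (0 < a i)%N)
  (a_dvd_bounded : forall p, prime p -> exists B, forall i, (p %| a i)%N -> (i < B)%N).

Let prime_bound p : exists B, prime p -> forall i, (p %| a i)%N -> (i < B)%N.
Proof.
by case: (boolP (prime p)) => [/a_dvd_bounded [B hB] | _]; [exists B | exists 0%N].
Qed.
Let B := projT1 (choice prime_bound).
Let BP p : prime p -> forall i, (p %| a i)%N -> (i < B p)%N := projT2 (choice prime_bound) p.

Lemma exists_coprime_after (N t : nat) : (0 < N)%N -> exists2 i, (t < i)%N & coprime (a i) N.
Proof.
move=> N_gt0; exists (maxn t (\max_(q < N.+1) B q)).+1; first by rewrite ltnS leq_maxl.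
rewrite coprime_has_primes //; apply/hasPn => q; rewrite mem_primes => /and3P [q_pr _ q_dvdN].
have q_lt : (q < N.+1)%N by rewrite ltnS dvdn_leq.
rewrite /= mem_primes q_pr a_gt0 /=; apply/negP => /(BP q_pr); apply/negP; rewrite -leqNgt.
apply: leq_trans (leqnSn _); apply: leq_trans (leq_maxr _ _).
exact: (@leq_bigmax _ (fun q : 'I_N.+1 => B q) (Ordinal q_lt)).
Qed.

Lemma exists_coprime_subsequence : exists s : nat -> nat,
  (forall k l, k < l -> s k < s l)%N /\ (forall k l, k <> l -> coprime (a (s k)) (a (s l))).
Proof.
have next_ex (tN : nat * nat) :
    exists i, (tN.1 < i)%N /\ ((0 < tN.2)%N -> coprime (a i) tN.2).
  have [N0|N_gt0] := posnP tN.2; first by exists tN.1.+1; rewrite N0.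
  by have [i t_lt cop] := exists_coprime_after tN.1 N_gt0; exists i.
have [next nextP] := choice next_ex.
(* The state after step k is (s k, a (s 0) * ... * a (s k)). *)
pose st := fix st k := if k is k'.+1
  then let i := next (st k') in (i, (st k').2 * a i)%N else (0%N, a 0%N).
pose s k := (st k).1; pose P k := (st k).2.
have P_gt0 k : (0 < P k)%N by elim: k => [|k IH]; rewrite /P /= ?muln_gt0 ?a_gt0 ?IH.
have s_lt k : (s k < s k.+1)%N := (nextP (st k)).1.
have s_cop k : coprime (a (s k.+1)) (P k) := (nextP (st k)).2 (P_gt0 k).
have dvd_P k l : (k <= l)%N -> (a (s k) %| P l)%N.
  elim: l => [|l IH]; first by rewrite leqn0 => /eqP ->.
  rewrite leq_eqVlt => /orP [/eqP -> | /IH k_dvd]; first exact: dvdn_mull.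
  exact: dvdn_mulr.
have s_incr : {homo s : k l / (k < l)%N} := homo_ltn ltn_trans s_lt.
have cop_lt k l : (k < l)%N -> coprime (a (s k)) (a (s l)).
  case: l => // l; rewrite ltnS coprime_sym => le_kl.
  exact: coprime_dvdr (dvd_P _ _ le_kl) (s_cop l).
exists s; split => // k l neq_kl.
by case: (ltngtP k l) neq_kl => // [/cop_lt | /cop_lt]; rewrite // coprime_sym.
Qed.

End CoprimeSubsequence.

Local Close Scope ring_scope.

Theorem proposition3p16 (m : nat) (hm : (1 <= m)%N)
  (L : nat -> 'rV[int]_m -> Prop)
  (hproper : forall i, proper_lattice (L i))
  (hcop : forall i j, i <> j -> coprime_lattices (L i) (L j)) :
  exists (s : nat -> nat) (idx : nat -> nat),
    (forall k l, (k < l)%N -> (s k < s l)%N) /\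
    (forall k, has_index (L (s k)) (idx k)) /\
    (forall k l, k <> l -> coprime (idx k) (idx l)).
Proof.
have L_sub i : subgroupZ (L i) by case: (hproper i) => [[]].
have index_ex i : exists n, has_index (L i) n by case: (hproper i) => [[]].
have [idx L_idx] := choice index_ex.
have idx_gt0 i : 0 < idx i.
  by have [f [f_cover _]] := L_idx i; apply: has_index_gt0 f_cover.
have [s [s_incr s_cop]] := exists_coprime_subsequence idx_gt0
  (fun p p_pr => bounded_index_dvd L_sub hcop L_idx p_pr).
by exists s, (fun k => idx (s k)).
Qed.
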